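(* Let $A \in \mathbb{R}^{m \times n}$ and $b \in \mathbb{R}^m$ be such that $\mathcal{P} = \{x \in \mathbb{R}^n : Ax \geq b\}$ is a polytope. Let $G$ be a finite undirected graph whose vertices are pairs $u = (I, X)$ with $I \subset [m]$ and $X \in \mathbb{R}^{n \times (1+m)}$. Suppose that $G$ is nonempty and that for every vertex $u = (I,X)$ of $G$: (i) $\#I = n$; (ii) $A_I X = \tilde b_I$; (iii) $A X \geq_{\mathrm{lex}} \tilde b$; (iv) $u$ has exactly $n$ neighbors in $G$; (v) for every neighbor $u' = (I', X')$ of $u$ in $G$, $\#(I \cap I') = n-1$. Then the vertex-edge graph $G_\mathrm{vert}$ of $\mathcal{P}$ equals the image of $G$ by the map $\varphi : (I,X) \mapsto$ (first column of $X$).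
   Context: Let $\tilde b := [\,b \;\; -\mathrm{Id}_m\,] \in \mathbb{R}^{m \times (1+m)}$. For row vectors $\alpha,\beta \in \mathbb{R}^{1+m}$, $\alpha \leq_{\mathrm{lex}} \beta$ means $\alpha = \beta$ or $\alpha_k < \beta_k$ at the first index $k$ where they differ; for matrices with $1+m$ columns, $X \geq_{\mathrm{lex}} Y$ means $X_i \geq_{\mathrm{lex}} Y_i$ for every row $i$. For $I \subset [m]$, $A_I$, $\tilde b_I$ are the submatrices of rows indexed by $I$. A face of $\mathcal{P}$ is a nonempty set of minimizers over $\mathcal{P}$ of some linear function $x \mapsto \langle c, x\rangle$; vertices and edges are faces of dimension 0 and 1; two vertices $v,w$ are adjacent if the segment $[v,w]$ is an edge. $G_\mathrm{vert}$ is the graph on the vertices of $\mathcal{P}$ with this adjacency. The image of a graph $(V,E)$ by $f$ is the graph with vertex set $f(V)$ and edges $\{(f(v),f(w)) : (v,w) \in E,\ f(v) \neq f(w)\}$. *)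

From HB Require Import structures.
From mathcomp Require Import all_boot all_order all_algebra.
From mathcomp Require Import reals.
Set Implicit Arguments. Unset Strict Implicit. Unset Printing Implicit Defensive.
Import Order.TTheory GRing.Theory Num.Theory.
Local Open Scope ring_scope.

Section PolytopeDefs.
Variables (R : realType) (m n : nat).
Variables (A : 'M[R]_(m, n)) (b : 'cV[R]_m).

Definition inP (x : 'cV[R]_n) : Prop := forall i : 'I_m, b i 0 <= (A *m x) i 0.

Definition bounded_P : Prop :=
  exists M : R, forall x, inP x -> forall j : 'I_n, `|x j 0| <= M.

Definition dotc (c x : 'cV[R]_n) : R := \sum_(j < n) c j 0 * x j 0.

Definition minimizers (c : 'cV[R]_n) (x : 'cV[R]_n) : Prop :=
  inP x /\ forall y, inP y -> dotc c x <= dotc c y.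

Definition is_face (S : 'cV[R]_n -> Prop) : Prop :=
  (exists x, S x) /\ exists c, forall x, S x <-> minimizers c x.

Definition is_vertex (v : 'cV[R]_n) : Prop := is_face (fun x => x = v).

Definition segment (v w : 'cV[R]_n) (x : 'cV[R]_n) : Prop :=
  exists t : R, 0 <= t <= 1 /\ x = (1 - t) *: v + t *: w.

Definition adjacent (v w : 'cV[R]_n) : Prop :=
  is_vertex v /\ is_vertex w /\ v <> w /\ is_face (segment v w).

Definition btilde : 'M[R]_(m, m.+1) := row_mx b (- 1%:M).

End PolytopeDefs.

Definition lex_le (R : realType) (k : nat) (a c : 'rV[R]_k) : Prop :=
  a = c \/ exists j : 'I_k,
    (forall j' : 'I_k, (j' < j)%N -> a 0 j' = c 0 j') /\ a 0 j < c 0 j.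

Definition good_label (R : realType) (m n : nat) (A : 'M[R]_(m, n)) (b : 'cV[R]_m)
  (I : {set 'I_m}) (X : 'M[R]_(n, m.+1)) : Prop :=
  #|I| = n /\
  (forall i : 'I_m, i \in I -> row i (A *m X) = row i (btilde b)) /\
  (forall i : 'I_m, lex_le (row i (btilde b)) (row i (A *m X))).

From HB Require Import structures.
From mathcomp Require Import all_boot all_order all_algebra.
From mathcomp Require Import reals.
From Stdlib Require Import Classical.
From mathcomp Require Import lra.
Import Order.TTheory GRing.Theory Num.Theory.
Local Open Scope ring_scope.
Set Implicit Arguments. Unset Strict Implicit. Unset Printing Implicit Defensive.

(** A label (I, X) satisfying (i)-(iii) is a lexicographically feasible basis of the
    perturbed system A x >= b - (eps, eps^2, ..., eps^m)^T: the perturbed basic point is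
    X (1, eps, ..., eps^m)^T, its unperturbed part (the first column of X) is a vertex of
    P, and row i of A X - btilde lists the coefficients of the slack of constraint i.
    The perturbation makes every basis nondegenerate (nonbasic slacks are
    lexicographically positive), so for each k in I at most one basis is obtained by
    letting k leave: this is the lexicographic ratio test.  Hence the n neighbours of a
    label in G are exactly its n pivots, and G contains every lexicographically feasible
    basis (I0, X0): at the label of G minimizing the lexicographic objective
    sum_(i in I0) slack_i, a negative reduced cost would pivot to a smaller neighbour,
    and nonnegative reduced costs force the label to be (I0, X0).  Finally, saturating
    tight constraints by ratio tests yields a basis at every vertex and, for every edge
    [x, y], a basis at x whose pivot runs along the edge; conversely a pivot between
    labels with distinct points follows an edge. *)

Section LexOrder.
Variables (R : realType) (k : nat).
Implicit Types a c : 'rV[R]_k.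

Definition lex_pos a : Prop :=
  exists j : 'I_k, (forall j' : 'I_k, (j' < j)%N -> a 0 j' = 0) /\ 0 < a 0 j.

Definition lex_nneg a : Prop := a = 0 \/ lex_pos a.

Lemma lex_pos0 : ~ lex_pos 0.
Proof. by case=> j [_]; rewrite mxE ltxx. Qed.

Lemma lex_posD a c : lex_pos a -> lex_pos c -> lex_pos (a + c).
Proof.
move=> [ja [za pa]] [jc [zc pc]].
wlog le_ac : a c ja jc za pa zc pc / (ja <= jc)%N => [hwlog|].
  have [le|/ltnW le] := leqP ja jc; first exact: (hwlog a c ja jc).
  by rewrite addrC; apply: (hwlog c a jc ja).
exists ja; split=> [j lt|]; rewrite !mxE.
  by rewrite za // zc ?addr0 // (leq_trans lt le_ac).
have [eq_ac|lt_ac] := eqVneq ja jc.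
  by rewrite eq_ac in pa *; apply: addr_gt0.
by rewrite zc ?addr0 // ltn_neqAle le_ac andbT (inj_eq val_inj).
Qed.

Lemma lex_posZ r a : 0 < r -> lex_pos a -> lex_pos (r *: a).
Proof.
move=> r0 [j [za pa]]; exists j; split=> [j' lt|]; rewrite !mxE.
  by rewrite za // mulr0.
exact: mulr_gt0.
Qed.

Lemma lex_pos_antisym a : lex_pos a -> lex_pos (- a) -> False.
Proof. by move=> pa /(lex_posD pa); rewrite subrr; apply: lex_pos0. Qed.

Lemma lex_posZ_neg r a : r < 0 -> lex_pos (r *: a) -> lex_pos (- a).
Proof.
move=> r0 /(lex_posZ (r := (- r)^-1)); rewrite invr_gt0 oppr_gt0 => /(_ r0).
by rewrite scalerA invrN mulNr mulVf ?lt_eqF // scaleN1r.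
Qed.

Lemma lex_nnegD a c : lex_nneg a -> lex_nneg c -> lex_nneg (a + c).
Proof.
case=> [->|pa]; first by rewrite add0r.
by case=> [->|pc]; [rewrite addr0; right | right; apply: lex_posD].
Qed.

Lemma lex_pos_nnegD a c : lex_pos a -> lex_nneg c -> lex_pos (a + c).
Proof. by move=> pa [->|pc]; [rewrite addr0 | apply: lex_posD]. Qed.

Lemma lex_nnegZ r a : 0 <= r -> lex_nneg a -> lex_nneg (r *: a).
Proof.
rewrite le_eqVlt => /predU1P [<-|r0]; first by rewrite scale0r; left.
by case=> [->|pa]; [rewrite scaler0; left | right; apply: lex_posZ].
Qed.

Lemma lex_nneg_pos a : lex_nneg a -> a != 0 -> lex_pos a.
Proof. by case=> [->|//]; rewrite eqxx. Qed.

Lemma lex_nneg_antisym a : lex_nneg a -> lex_nneg (- a) -> a = 0.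
Proof.
case=> // pa [/eqP|pn]; first by rewrite oppr_eq0 => /eqP.
by case: (lex_pos_antisym pa pn).
Qed.

Lemma lex_nneg_total a : lex_nneg a \/ lex_nneg (- a).
Proof.
have [j0 nzj0|z] := pickP (fun j : 'I_k => a 0 j != 0); last first.
  by left; left; apply/rowP => j; rewrite mxE; apply/eqP/negbFE/z.
have [j nzj minj] := @arg_minnP _ j0 (fun j => a 0 j != 0) val nzj0.
have za (j' : 'I_k) : (j' < j)%N -> a 0 j' = 0.
  by move=> lt; apply/eqP/negPn; apply: contraTN lt => /minj; rewrite -leqNgt.
have [neg|pos|eq0] := ltgtP (a 0 j) 0; last by rewrite eq0 eqxx in nzj.
  right; right; exists j; split=> [j' /za|]; rewrite mxE ?oppr_gt0 //.
  by move=> ->; rewrite oppr0.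
by left; right; exists j.
Qed.

Lemma lex_pos_cancel s t r : lex_pos s -> lex_nneg t -> s + r *: t = 0 -> r < 0.
Proof.
move=> ps nt st0; rewrite ltNge; apply/negP => r0.
by have := lex_pos_nnegD ps (lex_nnegZ r0 nt); rewrite st0; apply: lex_pos0.
Qed.

Lemma lex_posZ_nneg r a : lex_pos a -> lex_nneg (r *: a) -> 0 <= r.
Proof.
move=> pa; rewrite leNgt; apply: contraPN => r0.
have pn : lex_pos (- (r *: a)) by rewrite -scaleNr; apply: lex_posZ; rewrite ?oppr_gt0.
case=> [z|p]; last exact: lex_pos_antisym p pn.
by move: pn; rewrite z oppr0; apply: lex_pos0.
Qed.

Lemma lex_nneg_sum (I : finType) (P : pred I) (F : I -> 'rV[R]_k) :
  (forall i, P i -> lex_nneg (F i)) -> lex_nneg (\sum_(i | P i) F i).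
Proof. by move=> h; apply: (big_ind lex_nneg) => //; [left | apply: lex_nnegD]. Qed.

Lemma lex_nneg_sum_eq0 (I : finType) (P : pred I) (F : I -> 'rV[R]_k) :
  (forall i, P i -> lex_nneg (F i)) -> \sum_(i | P i) F i = 0 ->
  forall i, P i -> F i = 0.
Proof.
move=> h s0 i Pi; apply/eqP; apply: contraT => nz.
have rest : lex_nneg (\sum_(j | P j && (j != i)) F j).
  by apply: lex_nneg_sum => j /andP [Pj _]; apply: h.
have := lex_pos_nnegD (lex_nneg_pos (h i Pi) nz) rest.
by rewrite -bigD1 // s0 => /lex_pos0.
Qed.

Lemma lex_leE a c : lex_le a c <-> lex_nneg (c - a).
Proof.
split.
  case=> [->|[j [h lt]]]; first by rewrite subrr; left.
  right; exists j; split=> [j' l|]; rewrite !mxE ?subr_gt0 //.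
  by rewrite h // subrr.
case=> [/eqP|[j [h lt]]]; first by rewrite subr_eq0 => /eqP ->; left.
right; exists j; split=> [j' /h|]; last by move: lt; rewrite !mxE subr_gt0.
by rewrite !mxE => /eqP; rewrite subr_eq0 => /eqP.
Qed.

Lemma lex_argmin (T : eqType) (s : seq T) (f : T -> 'rV[R]_k) :
  s != [::] -> exists2 t, t \in s & forall t', t' \in s -> lex_nneg (f t' - f t).
Proof.
elim: s => [//|x [|y s] IH] _.
  by exists x => [|t']; rewrite ?inE // => /eqP ->; rewrite subrr; left.
have [t ts ht] := IH isT.
have [le|le] := lex_nneg_total (f x - f t).
  exists t => [|t']; first by rewrite inE ts orbT.
  by rewrite inE => /predU1P [->|/ht].
exists x => [|t']; first exact: mem_head.
rewrite inE => /predU1P [->|/ht h]; first by rewrite subrr; left.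
by rewrite opprB in le; have := lex_nnegD h le; rewrite addrA subrK.
Qed.

End LexOrder.

Lemma lex_nneg_head (R : realType) (k : nat) (a : 'rV[R]_k.+1) :
  lex_nneg a -> 0 <= a 0 0.
Proof.
case=> [->|[j [za pa]]]; first by rewrite mxE.
have [j0|jp] := posnP j; last by rewrite za.
by rewrite (_ : 0 = j) ?ltW //; apply: val_inj.
Qed.

Section LabelMatrices.
Variables (R : realType) (m n : nat) (A : 'M[R]_(m, n)) (b : 'cV[R]_m).

Definition Asub (S : {set 'I_m}) : 'M[R]_(#|S|, n) := rowsub (fun r => enum_val r) A.

Lemma row_Asub_mul S p (Z : 'M[R]_(n, p)) r :
  row r (Asub S *m Z) = row (enum_val r) (A *m Z).
Proof. by rewrite mul_rowsub_mx row_rowsub. Qed.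

Lemma Asub_inj S p (Z : 'M[R]_(n, p)) : row_full (Asub S) ->
  (forall i, i \in S -> row i (A *m Z) = 0) -> Z = 0.
Proof.
move=> rf h; apply: (row_full_inj rf); rewrite mulmx0.
by apply/row_matrixP => r; rewrite row_Asub_mul row0 h ?enum_valP.
Qed.

Lemma Asub_inj_cV S (d : 'cV[R]_n) : row_full (Asub S) ->
  (forall i, i \in S -> (A *m d) i 0 = 0) -> d = 0.
Proof.
move=> rf h; apply: (Asub_inj rf) => i /h Ad0.
by apply/rowP => j; rewrite (ord1 j) [LHS]mxE Ad0 mxE.
Qed.

Lemma mulmx_col_entry p (X : 'M[R]_(n, p)) i j : (A *m col j X) i 0 = (A *m X) i j.
Proof. by rewrite !mxE; apply: eq_bigr => l _; rewrite mxE. Qed.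

Lemma mulmx_entryD (x y : 'cV[R]_n) i : (A *m (x + y)) i 0 = (A *m x) i 0 + (A *m y) i 0.
Proof. by rewrite mulmxDr [LHS]mxE. Qed.

Lemma mulmx_entryN (x : 'cV[R]_n) i : (A *m - x) i 0 = - (A *m x) i 0.
Proof. by rewrite mulmxN [LHS]mxE. Qed.

Lemma mulmx_entryB (x y : 'cV[R]_n) i : (A *m (x - y)) i 0 = (A *m x) i 0 - (A *m y) i 0.
Proof. by rewrite mulmx_entryD mulmx_entryN. Qed.

Lemma mulmx_entryZ c (x : 'cV[R]_n) i : (A *m (c *: x)) i 0 = c * (A *m x) i 0.
Proof. by rewrite -scalemxAr [LHS]mxE. Qed.

Lemma Asub_ker (S : {set 'I_m}) : (#|S| < n)%N ->
  exists2 d : 'cV[R]_n, d != 0 & forall i, i \in S -> (A *m d) i 0 = 0.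
Proof.
move=> lt; set C := cokermx (Asub S).
have : C != 0.
  rewrite -mxrank_eq0 mxrank_coker subn_eq0 -ltnNge.
  exact: leq_ltn_trans (rank_leq_row _) lt.
have [j nzj|z] := pickP (fun j => col j C != 0); last first.
  case/eqP; apply/matrixP => i j.
  by move/negbFE/eqP: (z j) => /(congr1 (fun M : 'cV_n => M i 0)); rewrite !mxE.
exists (col j C) => // i iS.
have := congr1 (fun M : 'rV_n => M 0 j) (row_Asub_mul C (enum_rank_in iS i)).
by rewrite mulmx_coker enum_rankK_in // mulmx_col_entry !mxE => <-.
Qed.

Lemma row_entry p q (M : 'M[R]_(p, q)) i j : row i M 0 j = M i j.
Proof. exact: mxE. Qed.

Lemma btilde_rshift i j : btilde b i (rshift 1 j) = - (i == j)%:R.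
Proof. by have := row_mxEr b (- 1%:M) i j; rewrite /btilde => ->; rewrite !mxE. Qed.

Lemma btilde_lshift i : btilde b i (lshift m (ord0 : 'I_1)) = b i 0.
Proof. exact: (row_mxEl b (- 1%:M) i ord0). Qed.

Definition slack (X : 'M[R]_(n, m.+1)) i : 'rV[R]_m.+1 := row i (A *m X) - row i (btilde b).
Definition lex_feasible X : Prop := forall i, lex_nneg (slack X i).
Definition tight_set X : {set 'I_m} := [set i | slack X i == 0].

Lemma slackE X i j : slack X i 0 j = (A *m X) i j - btilde b i j.
Proof. by rewrite !mxE. Qed.

Lemma slack_head X i : slack X i 0 0 = (A *m col ord0 X) i 0 - b i 0.
Proof.
by rewrite slackE mulmx_col_entry -btilde_lshift; congr (_ - btilde _ _ _); apply: val_inj.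
Qed.

Lemma slack_rshift0 X i j : slack X i = 0 -> (A *m X) i (rshift 1 j) = - (i == j)%:R.
Proof.
move/subr0_eq/(congr1 (fun s : 'rV_m.+1 => s 0 (rshift 1 j))).
by rewrite !row_entry => ->; apply: btilde_rshift.
Qed.

Lemma slackB X Y i : row i (A *m (Y - X)) = slack Y i - slack X i.
Proof. by rewrite /slack mulmxBr linearB /= opprB addrA subrK. Qed.

Lemma row_mul_outer p (d : 'cV[R]_n) (t : 'rV[R]_p) i :
  row i (A *m (d *m t)) = (A *m d) i 0 *: t.
Proof. by rewrite mulmxA row_mul [row i _]mx11_scalar mul_scalar_mx mxE. Qed.

Lemma slack_update X (d : 'cV[R]_n) (t : 'rV[R]_m.+1) i :
  slack (X + d *m t) i = slack X i + (A *m d) i 0 *: t.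
Proof. by rewrite /slack mulmxDr linearD /= row_mul_outer addrAC. Qed.

Lemma Asub_rank (S : {set 'I_m}) X :
  (forall i, i \in S -> slack X i = 0) -> (#|S| <= \rank (Asub S))%N.
Proof.
move=> hS.
pose E : 'M[R]_(#|S|, m) := \matrix_(r, j) (enum_val r == j)%:R.
pose Y : 'M[R]_(n, m) := \matrix_(l, j) X l (rshift 1 j).
have AE : Asub S *m - Y = E.
  apply/matrixP => r j; rewrite mulmxN mxE -(row_entry (Asub S *m Y)) row_Asub_mul row_entry.
  have -> : (A *m Y) (enum_val r) j = (A *m X) (enum_val r) (rshift 1 j).
    by rewrite !mxE; apply: eq_bigr => l _; rewrite mxE.
  by rewrite slack_rshift0 ?hS ?enum_valP // opprK mxE.
have EE : E *m E^T = 1%:M.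
  apply/matrixP => r r'; rewrite !mxE (bigD1 (enum_val r)) //= big1 => [|j nj].
    by rewrite !mxE eqxx mul1r addr0 (inj_eq enum_val_inj) eq_sym.
  by rewrite !mxE eq_sym (negbTE nj) mul0r.
apply: (@leq_trans (\rank (E *m E^T))); first by rewrite EE mxrank1.
by rewrite -AE; apply: leq_trans (mxrankM_maxl _ _) (mxrankM_maxl _ _).
Qed.

End LabelMatrices.

Section GoodLabels.
Variables (R : realType) (m n : nat) (A : 'M[R]_(m, n)) (b : 'cV[R]_m).
Local Notation good := (good_label A b).
Local Notation slack := (slack A b).

Lemma good_label_card I X : good I X -> #|I| = n.
Proof. by case. Qed.

Lemma good_label_slack0 I X i : good I X -> i \in I -> slack X i = 0.
Proof. by case=> _ [hI _] iI; rewrite /slack hI // subrr. Qed.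

Lemma good_label_feasible I X : good I X -> lex_feasible A b X.
Proof. by case=> _ [_ hl] i; apply/lex_leE. Qed.

Lemma good_label_row_full I X : good I X -> row_full (Asub A I).
Proof.
move=> g; rewrite /row_full eqn_leq rank_leq_col -{1}(good_label_card g).
by apply: Asub_rank => i; apply: good_label_slack0 g.
Qed.

Lemma good_label_slack_pos I X i : good I X -> i \notin I -> lex_pos (slack X i).
Proof.
move=> g iI.
have Xi0 : col (rshift 1 i) X = 0.
  apply: (Asub_inj_cV (good_label_row_full g)) => l lI.
  rewrite mulmx_col_entry (slack_rshift0 _ (good_label_slack0 g lI)).
  by case: eqP iI => [<-|]; rewrite ?lI ?oppr0.
apply: lex_nneg_pos (good_label_feasible g i) _.
apply/eqP => /(congr1 (fun s : 'rV_m.+1 => s 0 (rshift 1 i))).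
rewrite slackE btilde_rshift eqxx -mulmx_col_entry Xi0 mulmx0 !mxE sub0r opprK.
by move/eqP; rewrite oner_eq0.
Qed.

Lemma good_label_subset I X I' X' : good I X -> good I' X' -> I \subset I' -> I = I'.
Proof.
move=> g g' sub; apply/eqP.
by rewrite eqEcard sub (good_label_card g) (good_label_card g') leqnn.
Qed.

Lemma good_label_eq I X I' X' : good I X -> good I' X' ->
  (forall i, i \in I' -> slack X i = 0) -> I' = I /\ X' = X.
Proof.
move=> g g' hX; split.
  apply: (good_label_subset g' g); apply/subsetP => i iI'; apply: contraT => iI.
  by have := good_label_slack_pos g iI; rewrite hX //; move/lex_pos0.
apply/eqP; rewrite -subr_eq0; apply/eqP; apply: (Asub_inj (good_label_row_full g')) => i iI'.
by rewrite (slackB A b) hX // (good_label_slack0 g') // subrr.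
Qed.

Definition pivot_dir (I : {set 'I_m}) k (d : 'cV[R]_n) : Prop :=
  (forall i, i \in I :\ k -> (A *m d) i 0 = 0) /\ (A *m d) k 0 = 1.

Lemma pivot_direction I X k : good I X -> k \in I -> exists d, pivot_dir I k d.
Proof.
move=> g kI.
have lt : (#|I :\ k| < n)%N by rewrite -(good_label_card g) (cardsD1 k I) kI.
have [d0 nz0 hd0] := Asub_ker A lt.
set a := (A *m d0) k 0.
have a0 : a != 0.
  apply: contra nz0 => /eqP a0; apply/eqP/(Asub_inj_cV (good_label_row_full g)) => i iI.
  by have [->|ik] := eqVneq i k; last by apply: hd0; rewrite !inE ik.
by exists (a^-1 *: d0); split=> [i /hd0 Ai0|]; rewrite mulmx_entryZ ?Ai0 ?mulr0 ?mulVf.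
Qed.

Lemma pivot_dir_kernel I X k d p (D : 'M[R]_(n, p)) : good I X -> k \in I -> pivot_dir I k d ->
  (forall i, i \in I :\ k -> row i (A *m D) = 0) -> D = d *m row k (A *m D).
Proof.
move=> g kI [hd hk] hD; apply/eqP; rewrite -subr_eq0; apply/eqP.
apply: (Asub_inj (good_label_row_full g)) => i iI.
rewrite mulmxBr linearB /= row_mul_outer.
have [->|ik] := eqVneq i k; first by rewrite hk scale1r subrr.
by rewrite hD ?hd ?inE ?ik // scale0r subrr.
Qed.

Lemma pivot_dir_kernel_cV I X k d (w : 'cV[R]_n) : good I X -> k \in I -> pivot_dir I k d ->
  (forall i, i \in I :\ k -> (A *m w) i 0 = 0) -> w = (A *m w) k 0 *: d.
Proof.
move=> g kI dk hw; rewrite {1}(pivot_dir_kernel g kI dk (D := w)).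
  by rewrite [row k _]mx11_scalar mul_mx_scalar mxE.
by move=> i /hw w0; apply/rowP => j; rewrite (ord1 j) [LHS]mxE w0 mxE.
Qed.

Lemma pivot_eq I X I' X' k d : good I X -> good I' X' -> k \in I -> I :\ k \subset I' ->
  pivot_dir I k d -> X' = X + d *m slack X' k.
Proof.
move=> g g' kI sub dk.
have -> : slack X' k = row k (A *m (X' - X)).
  by rewrite (slackB A b) (good_label_slack0 g kI) subr0.
rewrite -(pivot_dir_kernel g kI dk); first by rewrite addrC subrK.
move=> i iIk; have /setD1P [_ iI] := iIk.
by rewrite (slackB A b) (good_label_slack0 g iI) (good_label_slack0 g' (subsetP sub _ iIk)) subrr.
Qed.

Lemma pivot_slack_lt I X I1 X1 I2 X2 k l : good I X -> good I1 X1 -> good I2 X2 ->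
  k \in I -> k \notin I1 -> I :\ k \subset I1 -> I :\ k \subset I2 ->
  l \in I1 -> l \notin I2 -> lex_pos (slack X1 k - slack X2 k).
Proof.
move=> g g1 g2 kI kI1 sub1 sub2 lI1 lI2.
have [d dk] := pivot_direction g kI.
have lI : l \notin I.
  apply: contra lI2 => lI; apply: (subsetP sub2); rewrite !inE lI andbT.
  by apply: contraNneq kI1 => <-.
set a := (A *m d) l 0.
have z1 : slack X l + a *: slack X1 k = 0.
  by rewrite -slack_update -(pivot_eq g g1 kI sub1 dk) (good_label_slack0 g1 lI1).
have p2 : lex_pos (slack X l + a *: slack X2 k).
  by rewrite -slack_update -(pivot_eq g g2 kI sub2 dk); apply: good_label_slack_pos g2 lI2.
have a0 : a < 0.
  exact: lex_pos_cancel (good_label_slack_pos g lI) (or_intror (good_label_slack_pos g1 kI1)) z1.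
rewrite -opprB; apply: (lex_posZ_neg a0).
have -> : a *: (slack X2 k - slack X1 k) =
    slack X l + a *: slack X2 k - (slack X l + a *: slack X1 k).
  by rewrite scalerBr opprD addrACA subrr add0r.
by rewrite z1 subr0.
Qed.

Lemma pivot_unique I X I1 X1 I2 X2 k : good I X -> good I1 X1 -> good I2 X2 ->
  k \in I -> k \notin I1 -> k \notin I2 -> I :\ k \subset I1 -> I :\ k \subset I2 -> I1 = I2.
Proof.
move=> g g1 g2 kI kI1 kI2 sub1 sub2.
have [|/subsetPn [l1 l1I1 l1I2]] := boolP (I1 \subset I2); first exact: (good_label_subset g1 g2).
have [/(good_label_subset g2 g1)//|/subsetPn [l2 l2I2 l2I1]] := boolP (I2 \subset I1).
case: (lex_pos_antisym (pivot_slack_lt g g1 g2 kI kI1 sub1 sub2 l1I1 l1I2)).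
by rewrite opprB; apply: (pivot_slack_lt g g2 g1 kI kI2 sub2 sub1 l2I2 l2I1).
Qed.

Lemma slack_sum_reduced I X (I0 : {set 'I_m}) : good I X -> exists lam : 'rV[R]_#|I|,
  forall Y, \sum_(i in I0) slack Y i - \sum_(i in I0) slack X i =
    \sum_r lam 0 r *: (slack Y (enum_val r) - slack X (enum_val r)).
Proof.
move=> g.
have [lam hlam] : exists lam : 'rV[R]_#|I|, \sum_(i in I0) row i A = lam *m Asub A I.
  by apply/submxP; apply: submx_full; apply: good_label_row_full g.
exists lam => Y; rewrite -sumrB.
under eq_bigr => i _ do rewrite -(slackB A b) row_mul.
rewrite -mulmx_suml hlam -mulmxA mulmx_sum_row.
by apply: eq_bigr => r _; rewrite row_Asub_mul (slackB A b).
Qed.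

End GoodLabels.

Lemma setD_eq1 (T : finType) (I I' : {set T}) n : #|I| = n -> #|I :&: I'| = (n - 1)%N ->
  (0 < n)%N -> exists k, I :\: I' = [set k].
Proof. by move=> cI cII' n0; apply/cards1P; rewrite cardsD cII' cI subKn. Qed.

Lemma setD_set1P (T : finType) (I I' : {set T}) k : I :\: I' = [set k] ->
  [/\ k \in I, k \notin I' & I :\ k \subset I'].
Proof.
move=> D; have /setDP [kI kI'] : k \in I :\: I' by rewrite D set11.
split=> //; apply/subsetP => i /setD1P [ik iI]; apply: contraR ik => iI'.
by rewrite -in_set1 -D inE iI iI'.
Qed.

Section LabelGraph.
Variables (R : realType) (m n : nat) (A : 'M[R]_(m, n)) (b : 'cV[R]_m).
Variables (V : finType) (e : rel V) (lab : V -> {set 'I_m} * 'M[R]_(n, m.+1)).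
Local Notation good := (good_label A b).
Local Notation slack := (slack A b).
Hypothesis lab_inj : injective lab.
Hypothesis lab_good : forall u, good (lab u).1 (lab u).2.
Hypothesis deg_n : forall u, #|[set u' | e u u']| = n.
Hypothesis adj_cap : forall u u', e u u' -> #|(lab u).1 :&: (lab u').1| = (n - 1)%N.

Lemma neighbour_pivot u k : k \in (lab u).1 ->
  exists u', [/\ e u u', k \notin (lab u').1 & (lab u).1 :\ k \subset (lab u').1].
Proof.
move=> kI; set I := (lab u).1; set N := [set u' | e u u'].
have cI : #|I| = n := good_label_card (lab_good u).
have n0 : (0 < n)%N by rewrite -cI; apply/card_gt0P; exists k.
pose kf u' := odflt k [pick j in I :\: (lab u').1].
have kfP u' : u' \in N -> [/\ kf u' \in I, kf u' \notin (lab u').1 & I :\ kf u' \subset (lab u').1].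
  rewrite inE => euu'; have [j Dj] := setD_eq1 cI (adj_cap euu') n0.
  rewrite /kf; case: pickP => [j'|/(_ j)]; rewrite Dj ?set11 // => /set1P ->.
  exact: setD_set1P.
have kf_inj : {in N &, injective kf}.
  move=> u1 u2 N1 N2 eq12; have [k1I k1u1 sub1] := kfP _ N1; have [_ k2u2 sub2] := kfP _ N2.
  rewrite eq12 in k1I k1u1 sub1.
  have eI := pivot_unique (lab_good u) (lab_good u1) (lab_good u2) k1I k1u1 k2u2 sub1 sub2.
  have s0 i : i \in (lab u2).1 -> slack (lab u1).2 i = 0.
    by rewrite -eI; apply: good_label_slack0.
  have [_ eX] := good_label_eq (lab_good u1) (lab_good u2) s0.
  by apply: lab_inj; rewrite [lab u1]surjective_pairing [lab u2]surjective_pairing eI eX.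
have kfN : kf @: N = I.
  apply/eqP; rewrite eqEcard (card_in_imset kf_inj) deg_n cI leqnn andbT.
  by apply/subsetP => _ /imsetP [u' Nu' ->]; case: (kfP _ Nu').
have : k \in kf @: N by rewrite kfN.
case/imsetP => u' Nu' ->.
by have [_ ? ?] := kfP _ Nu'; exists u'; split=> //; move: Nu'; rewrite inE.
Qed.

Lemma graph_complete I0 X0 : (exists u : V, True) -> good I0 X0 -> exists u, lab u = (I0, X0).
Proof.
move=> [u0 _] g0; pose F Y := \sum_(i in I0) slack Y i.
have nV : enum V != [::] by apply/eqP => eV; have := mem_enum V u0; rewrite eV.
have [us _ us_min] := lex_argmin (fun u => F (lab u).2) nV.
have g := lab_good us; set I := (lab us).1 in g *; set X := (lab us).2 in g us_min *.
have [lam Fdiff] := slack_sum_reduced I0 g.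
have [lam_ge0|/existsP [r]] := boolP [forall r, 0 <= lam 0 r].
  have FX0 : F X0 = 0 by apply: big1 => i; apply: good_label_slack0 g0.
  have F_ge0 : lex_nneg (F X0 - F X).
    rewrite Fdiff; apply: lex_nneg_sum => r _; apply: lex_nnegZ; first exact: (forallP lam_ge0).
    by rewrite (good_label_slack0 g (enum_valP r)) subr0; apply: (good_label_feasible g0).
  have FX : F X = 0.
    apply: lex_nneg_antisym; first by apply: lex_nneg_sum => i _; apply: (good_label_feasible g).
    by rewrite -sub0r -FX0.
  have [eI eX] := good_label_eq g g0 (lex_nneg_sum_eq0 (fun i _ => good_label_feasible g i) FX).
  by exists us; rewrite [lab us]surjective_pairing -/I -/X eI eX.
rewrite -ltNge => lam_neg.
have [u' [euu' kI' sub']] := neighbour_pivot (enum_valP r).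
have := us_min u' (mem_enum _ _); rewrite Fdiff (bigD1 r) //= big1 => [|r' r'r]; last first.
  have r'I : enum_val r' \in I :\ enum_val r by rewrite !inE (inj_eq enum_val_inj) r'r enum_valP.
  rewrite (good_label_slack0 (lab_good u') (subsetP sub' _ r'I)).
  by rewrite (good_label_slack0 g (enum_valP r')) subrr scaler0.
rewrite addr0 (good_label_slack0 g (enum_valP r)) subr0.
move/(lex_posZ_nneg (good_label_slack_pos (lab_good u') kI')).
by rewrite leNgt lam_neg.
Qed.

End LabelGraph.

Lemma finite_dominating_scale (R : realType) (T : finType) (P : pred T) (p q : T -> R) :
  (forall i, P i -> 0 < q i) -> exists2 M, 0 < M & forall i, P i -> `|p i| < M * q i.
Proof.
move=> q_gt0; pose q' i := if P i then q i else 1.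
have q'_gt0 i : 0 < q' i by rewrite /q'; case: ifPn => // /q_gt0.
pose S := \sum_i `|p i| / q' i.
have S_ge0 : 0 <= S by apply: sumr_ge0 => i _; rewrite divr_ge0 // ltW.
exists (1 + S) => [|i Pi]; first by rewrite ltr_wpDr.
have le_pS : `|p i| <= S * q i.
  have <- : q' i = q i by rewrite /q' Pi.
  by rewrite -ler_pdivrMr // /S (bigD1 i) //= lerDl sumr_ge0 // => j _; rewrite divr_ge0 // ltW.
by apply: le_lt_trans le_pS _; rewrite mulrDl mul1r ltrDr q_gt0.
Qed.

Section Dot.
Variables (R : realType) (n : nat).
Implicit Types c x y : 'cV[R]_n.

Lemma dotcD c x y : dotc c (x + y) = dotc c x + dotc c y.
Proof. by rewrite /dotc -big_split /=; apply: eq_bigr => j _; rewrite mxE mulrDr. Qed.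

Lemma dotcZ c r x : dotc c (r *: x) = r * dotc c x.
Proof. by rewrite /dotc mulr_sumr; apply: eq_bigr => j _; rewrite mxE mulrCA. Qed.

Lemma dotcB c x y : dotc c (x - y) = dotc c x - dotc c y.
Proof. by rewrite dotcD -scaleN1r dotcZ mulN1r. Qed.

Lemma segmentE x y t : (1 - t) *: x + t *: y = x + t *: (y - x).
Proof. by rewrite scalerBr scalerBl scale1r addrA addrAC. Qed.

End Dot.

Section Polytope.
Variables (R : realType) (m n : nat) (A : 'M[R]_(m, n)) (b : 'cV[R]_m).
Local Notation inP := (inP A b).
Local Notation minimizers := (minimizers A b).

Definition constraint_sum (S : {set 'I_m}) : 'cV[R]_n := \sum_(i in S) (row i A)^T.

Lemma dotc_constraint_sum (S : {set 'I_m}) z :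
  dotc (constraint_sum S) z = \sum_(i in S) (A *m z) i 0.
Proof.
rewrite /dotc; under eq_bigr => j _ do rewrite /constraint_sum summxE big_distrl /=.
rewrite exchange_big /=; apply: eq_bigr => i _; rewrite mxE.
by apply: eq_bigr => j _; rewrite !mxE.
Qed.

Lemma minimizers_constraint_sum (S : {set 'I_m}) x :
  inP x -> (forall i, i \in S -> (A *m x) i 0 = b i 0) ->
  forall z, minimizers (constraint_sum S) z <->
    inP z /\ forall i, i \in S -> (A *m z) i 0 = b i 0.
Proof.
move=> xP xS z; split=> [[zP zmin]|[zP zS]]; last first.
  split=> // y yP; rewrite !dotc_constraint_sum (eq_bigr _ zS).
  by apply: ler_sum => i _; apply: yP.
have le_zx := zmin _ xP; rewrite !dotc_constraint_sum (eq_bigr _ xS) -subr_le0 -sumrB in le_zx.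
split=> // i iS; apply/eqP; rewrite -subr_eq0; apply/eqP.
apply: (@psumr_eq0P _ _ (mem S) (fun i => (A *m z) i 0 - b i 0)) => // [j _|].
  by rewrite subr_ge0.
by apply/eqP; rewrite eq_le le_zx sumr_ge0 // => j _; rewrite subr_ge0.
Qed.

Lemma perturb_feasible z d : inP z ->
  (forall i, (A *m z) i 0 = b i 0 -> (A *m d) i 0 = 0) ->
  exists2 s, 0 < s & inP (z + s *: d) /\ inP (z - s *: d).
Proof.
move=> zP hd.
have slack_gt0 i : (A *m z) i 0 != b i 0 -> 0 < (A *m z) i 0 - b i 0.
  by rewrite subr_gt0 lt_def => ->; apply: zP.
have [M M0 hM] := finite_dominating_scale (fun i => (A *m d) i 0) slack_gt0.
have feas eps : `|eps| <= 1 -> inP (z + (eps / M) *: d).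
  move=> eps1 i; rewrite mulmx_entryD mulmx_entryZ.
  have [tight|nt] := eqVneq ((A *m z) i 0) (b i 0); first by rewrite hd // mulr0 addr0 tight.
  have : `|eps / M * (A *m d) i 0| < (A *m z) i 0 - b i 0.
    rewrite normrM normf_div (gtr0_norm M0) mulrAC ltr_pdivrMr //.
    apply: (@le_lt_trans _ _ `|(A *m d) i 0|); first exact: ler_piMl.
    by rewrite mulrC; apply: hM.
  rewrite ltr_norml => /andP [lo _].
  move: lo; set u := _ * _; set w := (A *m z) i 0; lra.
exists M^-1; first by rewrite invr_gt0.
split; [have := feas 1 | have := feas (-1)].
  by rewrite normr1 mul1r; apply.
by rewrite normrN normr1 mulN1r scaleNr; apply.
Qed.

Lemma minimizers_perturb c z d : minimizers c z ->
  (forall i, (A *m z) i 0 = b i 0 -> (A *m d) i 0 = 0) ->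
  exists2 s, 0 < s & minimizers c (z + s *: d).
Proof.
move=> [zP zmin] hd; have [s s0 [p1 p2]] := perturb_feasible zP hd.
have := zmin _ p1; have := zmin _ p2; rewrite dotcB dotcD !dotcZ => m2 m1.
have e0 : s * dotc c d = 0 by lra.
by exists s => //; split=> // y yP; rewrite dotcD dotcZ e0 addr0; apply: zmin.
Qed.

Lemma vertex_inP v : is_vertex A b v -> inP v.
Proof. by case=> _ [c hc]; case: ((hc v).1 erefl). Qed.

Lemma vertex_kernel v (d : 'cV[R]_n) : is_vertex A b v ->
  (forall i, (A *m v) i 0 = b i 0 -> (A *m d) i 0 = 0) -> d = 0.
Proof.
case=> _ [c hc] hd; have [s s0 /(hc _).2] := minimizers_perturb ((hc v).1 erefl) hd.
move/(congr1 (fun w => w - v)); rewrite addrC addKr subrr => /eqP.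
by rewrite scaler_eq0 gt_eqF //= => /eqP.
Qed.

Lemma vertex_not_interior v p q r : is_vertex A b v -> inP p -> inP q ->
  0 < r < 1 -> v = (1 - r) *: p + r *: q -> p = v.
Proof.
case=> _ [c hc] pP qP /andP [r0 r1] ev; have [vP vmin] := (hc v).1 erefl.
have := vmin _ pP; have := vmin _ qP.
have -> : dotc c v = (1 - r) * dotc c p + r * dotc c q by rewrite {1}ev dotcD !dotcZ.
move=> le_q le_p; have le_pv : dotc c p <= dotc c v by rewrite ev dotcD !dotcZ; nra.
by apply/(hc _).2; split=> // y /vmin; apply: le_trans.
Qed.

Lemma edge_direction x y c d : inP x -> inP y ->
  (forall z, segment x y z <-> minimizers c z) ->
  (forall i, (A *m x) i 0 = b i 0 -> (A *m y) i 0 = b i 0 -> (A *m d) i 0 = 0) ->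
  exists al, d = al *: (y - x).
Proof.
move=> xP yP hc hd; pose h : R := 2^-1; pose mid := x + h *: (y - x).
have h01 : 0 <= h <= 1 by rewrite invr_ge0 ler0n invf_le1 ?ler1n ?ltr0n.
have mid_min : minimizers c mid by apply/hc; exists h; rewrite segmentE.
have mid_tight i : (A *m mid) i 0 = b i 0 -> (A *m d) i 0 = 0.
  rewrite mulmx_entryD mulmx_entryZ mulmx_entryB /h => e.
  by apply: hd; move: (xP i) (yP i) => xi yi; lra.
have [s s0 /hc [t [_ et]]] := minimizers_perturb mid_min mid_tight.
move: et; rewrite segmentE /mid -addrA => /addrI e1.
exists (s^-1 * (t - h)); rewrite -scalerA scalerBl -e1 addrAC subrr add0r scalerA.
by rewrite mulVf ?scale1r // gt_eqF.
Qed.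

End Polytope.

Section LabelsOfPoints.
Variables (R : realType) (m n : nat) (A : 'M[R]_(m, n)) (b : 'cV[R]_m).
Local Notation good := (good_label A b).
Local Notation slack := (slack A b).
Local Notation inP := (inP A b).
Local Notation feasible := (lex_feasible A b).
Local Notation tight := (tight_set A b).

Lemma lex_feasible_inP X : feasible X -> inP (col ord0 X).
Proof. by move=> f i; have := lex_nneg_head (f i); rewrite slack_head subr_ge0. Qed.

Lemma slack_head0 X i : slack X i = 0 -> (A *m col ord0 X) i 0 = b i 0.
Proof. by move=> s0; apply/eqP; rewrite -subr_eq0 -slack_head s0 mxE. Qed.

Lemma good_label_col_tight I X i : good I X -> i \in I -> (A *m col ord0 X) i 0 = b i 0.
Proof. by move=> g /(good_label_slack0 g)/slack_head0. Qed.

Lemma good_label_vertex I X : good I X -> is_vertex A b (col ord0 X).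
Proof.
move=> g; have xP := lex_feasible_inP (good_label_feasible g).
have xI := good_label_col_tight g; have face := minimizers_constraint_sum xP xI.
split; first by exists (col ord0 X).
exists (constraint_sum A I) => z; split=> [->|/face [zP zI]]; first exact/face.
apply/eqP; rewrite -subr_eq0; apply/eqP/(Asub_inj_cV (good_label_row_full g)) => i iI.
by rewrite mulmx_entryB zI ?xI ?subrr.
Qed.

Lemma col_update X (d : 'cV[R]_n) (t : 'rV[R]_m.+1) :
  col ord0 (X + d *m t) = col ord0 X + t 0 0 *: d.
Proof.
have -> : (0 : 'I_m.+1) = ord0 by apply: val_inj.
by apply/colP => l; rewrite !mxE big_ord1 mulrC (_ : 0 = ord0 :> 'I_1).
Qed.

Definition lift_label (v : 'cV[R]_n) : 'M[R]_(n, m.+1) := row_mx v 0.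

Lemma lift_label_col v : col ord0 (lift_label v) = v.
Proof.
apply/colP => i; rewrite mxE (_ : ord0 = lshift m (0 : 'I_1)); last exact: val_inj.
exact: (row_mxEl v (0 : 'M[R]_(n, m)) i 0).
Qed.

Lemma lift_label_slack v i j : slack (lift_label v) i 0 (rshift 1 j) = (i == j)%:R.
Proof.
rewrite slackE btilde_rshift opprK -mulmx_col_entry.
have -> : col (rshift 1 j) (lift_label v) = 0.
  by apply/colP => l; rewrite [LHS]mxE /lift_label row_mxEr !mxE.
by rewrite mulmx0 mxE add0r.
Qed.

Lemma lift_label_feasible v : inP v -> feasible (lift_label v).
Proof.
move=> vP i; right.
have [lt|eq] := ltrP (b i 0) ((A *m v) i 0).
  by exists 0; split=> //; rewrite slack_head lift_label_col subr_gt0.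
have vi : (A *m v) i 0 = b i 0 by apply/eqP; rewrite eq_le eq vP.
exists (rshift 1 i); split=> [j lt|]; last by rewrite lift_label_slack eqxx ltr01.
have [j0|jp] := posnP j.
  by rewrite (_ : j = 0) ?slack_head ?lift_label_col ?vi ?subrr //; apply: val_inj.
have lj : (j.-1 < m)%N by rewrite -ltnS prednK // ltn_ord.
rewrite (_ : j = rshift 1 (Ordinal lj)) ?lift_label_slack; last first.
  by apply: val_inj; rewrite /= add1n prednK.
by case: eqP => // ei; move: lt; rewrite ei /= add1n prednK // ltnn.
Qed.

Lemma lift_label_tight v : tight (lift_label v) = set0.
Proof.
apply/setP => i; rewrite !inE; apply/negP => /eqP/(congr1 (fun s : 'rV_m.+1 => s 0 (rshift 1 i))).
by rewrite lift_label_slack eqxx mxE => /eqP; rewrite oner_eq0.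
Qed.

Lemma lex_ratio_test X (d : 'cV[R]_n) : feasible X -> (exists i, (A *m d) i 0 < 0) ->
  exists t, [/\ lex_nneg t, feasible (X + d *m t) &
    exists2 i, (A *m d) i 0 < 0 & slack (X + d *m t) i = 0].
Proof.
move=> fX [i0 di0]; pose r i := (- (A *m d) i 0)^-1 *: slack X i.
have rE i : (A *m d) i 0 < 0 -> slack X i = - (A *m d) i 0 *: r i.
  by move=> neg; rewrite /r scalerA mulfV ?scale1r // oppr_eq0 lt_eqF.
have nz : [seq i <- enum 'I_m | (A *m d) i 0 < 0] != [::].
  by apply/eqP => /(congr1 (fun s => i0 \in s)); rewrite mem_filter di0 mem_enum.
have [ix] := lex_argmin r nz; rewrite mem_filter mem_enum andbT => ix_neg ix_min.
have t_ge0 : lex_nneg (r ix) by apply: lex_nnegZ; [rewrite invr_ge0 oppr_ge0 ltW | apply: fX].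
exists (r ix); split=> //; last by exists ix; rewrite // slack_update rE // -scalerDl addNr scale0r.
move=> i; rewrite slack_update; have [neg|nneg] := ltP ((A *m d) i 0) 0.
  have -> : slack X i + (A *m d) i 0 *: r ix = - (A *m d) i 0 *: (r i - r ix).
    by rewrite (rE _ neg) scalerBr !scaleNr opprK.
  by apply: lex_nnegZ; [rewrite oppr_ge0 ltW | apply: ix_min; rewrite mem_filter neg mem_enum].
exact: lex_nnegD (fX i) (lex_nnegZ nneg t_ge0).
Qed.

Lemma tight_set_update X (d : 'cV[R]_n) t i : feasible X -> lex_nneg t ->
  i \in tight (X + d *m t) -> i \notin tight X -> (A *m d) i 0 < 0.
Proof.
move=> fX tnn; rewrite !inE slack_update => /eqP z nt.
exact: lex_pos_cancel (lex_nneg_pos (fX i) nt) tnn z.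
Qed.

Lemma tight_good X : feasible X ->
  (forall d : 'cV[R]_n, (forall i, i \in tight X -> (A *m d) i 0 = 0) -> d = 0) ->
  good (tight X) X.
Proof.
move=> fX ker0; have tX i : i \in tight X -> slack X i = 0 by rewrite inE => /eqP.
split; last split=> [i /tX /subr0_eq //|i]; last by apply/lex_leE; apply: fX.
apply/eqP; rewrite eqn_leq (leq_trans (Asub_rank tX)) ?rank_leq_col //=.
rewrite leqNgt; apply/negP => /(Asub_ker A) [d nz0 hd].
by move/eqP: nz0; apply; apply: ker0.
Qed.

End LabelsOfPoints.

Section FaceLabels.
Variables (R : realType) (m n : nat) (A : 'M[R]_(m, n)) (b : 'cV[R]_m).
Local Notation feasible := (lex_feasible A b).
Local Notation tight := (tight_set A b).

Definition ker_sub (S Q : {set 'I_m}) : Prop := forall d : 'cV[R]_n,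
  (forall i, i \in S -> (A *m d) i 0 = 0) -> forall i, i \in Q -> (A *m d) i 0 = 0.

(* [Q] is the set of constraints tight on a face through [x], and [e] points from [x]
   into the relative interior of that face. *)
Variables (x e : 'cV[R]_n) (Q : {set 'I_m}).
Hypothesis Q_tight : forall i, i \in Q -> (A *m x) i 0 = b i 0.
Hypothesis Q_dir : forall i, i \in Q -> (A *m e) i 0 = 0.
Hypothesis notQ_dir : forall i, (A *m x) i 0 = b i 0 -> i \notin Q -> 0 < (A *m e) i 0.

Lemma tight_extend X (d0 : 'cV[R]_n) i0 : feasible X -> col ord0 X = x -> tight X \subset Q ->
  (forall i, i \in tight X -> (A *m d0) i 0 = 0) -> i0 \in Q -> (A *m d0) i0 0 < 0 ->
  exists X', [/\ feasible X', col ord0 X' = x, tight X \proper tight X' & tight X' \subset Q].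
Proof.
move=> fX cX sX hd0 i0Q di0.
have e_gt0 i : ((A *m x) i 0 == b i 0) && (i \notin Q) -> 0 < (A *m e) i 0.
  by case/andP => /eqP; apply: notQ_dir.
have [M M0 hM] := finite_dominating_scale (fun i => (A *m d0) i 0) e_gt0.
pose d := d0 + M *: e.
have dE i : (A *m d) i 0 = (A *m d0) i 0 + M * (A *m e) i 0.
  by rewrite mulmx_entryD mulmx_entryZ.
have d_tight i : i \in tight X -> (A *m d) i 0 = 0.
  by move=> iT; rewrite dE hd0 // Q_dir ?mulr0 ?addr0 // (subsetP sX).
have d_out i : (A *m x) i 0 = b i 0 -> i \notin Q -> 0 < (A *m d) i 0.
  move=> xi iQ; have := hM i; rewrite xi eqxx iQ ltr_norml => /(_ isT) /andP [lo _].
  by rewrite dE -[M * _]opprK subr_gt0.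
have di0' : (A *m d) i0 0 < 0 by rewrite dE Q_dir // mulr0 addr0.
have [t [tnn fX' [ix ix_neg ix_tight]]] := lex_ratio_test fX (ex_intro _ i0 di0').
have t00 : t 0 0 = 0.
  apply/eqP; rewrite eq_le lex_nneg_head // andbT.
  have := lex_nneg_head (fX' i0); rewrite slack_head col_update cX.
  by rewrite mulmx_entryD mulmx_entryZ Q_tight // addrAC subrr add0r nmulr_lge0.
have cX' : col ord0 (X + d *m t) = x by rewrite col_update t00 scale0r addr0.
exists (X + d *m t); split=> //.
  rewrite properE; apply/andP; split.
    apply/subsetP => i iT; rewrite inE slack_update d_tight // scale0r addr0.
    by rewrite inE in iT.
  apply/subsetPn; exists ix; first by rewrite inE ix_tight.
  by apply: contraTN ix_neg => /d_tight ->; rewrite ltxx.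
apply/subsetP => i iT'; have [iT|nT] := boolP (i \in tight X); first exact: (subsetP sX).
have d_neg := tight_set_update fX tnn iT' nT.
apply: contraT => iQ; have xi : (A *m x) i 0 = b i 0.
  by rewrite -cX'; apply: slack_head0; move: iT'; rewrite inE => /eqP.
by have := d_out i xi iQ; rewrite ltNge ltW.
Qed.

Lemma tight_saturate X : feasible X -> col ord0 X = x -> tight X \subset Q ->
  exists X', [/\ feasible X', col ord0 X' = x, tight X \subset tight X', tight X' \subset Q &
    ker_sub (tight X') Q].
Proof.
suff: forall k X, (#|Q :\: tight X| < k)%N -> feasible X -> col ord0 X = x -> tight X \subset Q ->
    exists X', [/\ feasible X', col ord0 X' = x, tight X \subset tight X', tight X' \subset Q &
    ker_sub (tight X') Q].
  by apply; apply: ltnSn.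
elim=> // k IH Y lt fY cY sY.
have [[d0 [hd0 [i0 i0Q nz]]]|sat] := classic (exists d0 : 'cV[R]_n,
    (forall i, i \in tight Y -> (A *m d0) i 0 = 0) /\
    exists2 i0, i0 \in Q & (A *m d0) i0 0 != 0); last first.
  exists Y; split=> // d hd i iQ; apply/eqP/negPn/negP => nz.
  by apply: sat; exists d; split=> //; exists i.
wlog neg : d0 hd0 nz / (A *m d0) i0 0 < 0.
  move=> hw; have [neg|pos|z] := ltgtP ((A *m d0) i0 0) 0; first exact: (hw d0).
    apply: (hw (- d0)); rewrite ?mulmx_entryN ?oppr_lt0 ?oppr_eq0 //.
    by move=> i /hd0; rewrite mulmx_entryN => ->; rewrite oppr0.
  by rewrite z eqxx in nz.
have [X1 [fX1 cX1 pX1 sX1]] := tight_extend fY cY sY hd0 i0Q neg.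
have lt1 : (#|Q :\: tight X1| < k)%N.
  have pD : Q :\: tight X1 \proper Q :\: tight Y.
    rewrite properE (setDS _ (proper_sub pX1)) /=.
    have [_ [j jX1 jY]] := properP pX1.
    by apply/subsetPn; exists j; rewrite in_setD ?jX1 // jY (subsetP sX1).
  exact: leq_trans (proper_card pD) (ltnSE lt).
have [X2 [fX2 cX2 s12 sX2 sat2]] := IH X1 lt1 fX1 cX1 sX1.
by exists X2; split=> //; apply: subset_trans (proper_sub pX1) s12.
Qed.

End FaceLabels.

Section VerticesAndEdges.
Variables (R : realType) (m n : nat) (A : 'M[R]_(m, n)) (b : 'cV[R]_m).
Local Notation good := (good_label A b).
Local Notation slack := (slack A b).
Local Notation inP := (inP A b).
Local Notation tight := (tight_set A b).

Lemma pivot_gap I X k y : good I X -> k \in I -> inP y ->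
  (forall i, i \in I :\ k -> (A *m y) i 0 = b i 0) -> y != col ord0 X ->
  0 < (A *m (y - col ord0 X)) k 0.
Proof.
move=> g kI yP yI neq; have xI := good_label_col_tight g.
rewrite lt_def mulmx_entryB xI // subr_ge0 (yP k) andbT.
apply/eqP => /subr0_eq yk; move/eqP: neq; apply; apply/eqP; rewrite -subr_eq0; apply/eqP.
apply: (Asub_inj_cV (good_label_row_full g)) => i iI.
rewrite mulmx_entryB xI //; have [->|ik] := eqVneq i k; first by rewrite yk subrr.
by rewrite yI ?subrr // !inE ik.
Qed.

Lemma vertex_label_extend v X : is_vertex A b v -> lex_feasible A b X -> col ord0 X = v ->
  exists X', [/\ good (tight X') X', col ord0 X' = v & tight X \subset tight X'].
Proof.
move=> vv fX cX; pose T := [set i | (A *m v) i 0 == b i 0].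
have T_tight i : i \in T -> (A *m v) i 0 = b i 0 by rewrite inE => /eqP.
have T_dir i : i \in T -> (A *m (0 : 'cV[R]_n)) i 0 = 0 by rewrite mulmx0 mxE.
have notT_dir i : (A *m v) i 0 = b i 0 -> i \notin T -> 0 < (A *m (0 : 'cV[R]_n)) i 0.
  by rewrite inE => ->; rewrite eqxx.
have sT : tight X \subset T.
  by apply/subsetP => i; rewrite !inE -cX => /eqP/slack_head0 ->.
have [X' [fX' cX' sXX' _ kX']] := tight_saturate T_tight T_dir notT_dir fX cX sT.
exists X'; split=> //; apply: (tight_good fX') => d hd.
by apply: (vertex_kernel vv) => i vi; apply: (kX' d hd); rewrite inE vi.
Qed.

Lemma vertex_good_label v : is_vertex A b v -> exists I X, good I X /\ col ord0 X = v.
Proof.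
move=> vv; have fX := lift_label_feasible (vertex_inP vv).
have [X [gX cX _]] := vertex_label_extend vv fX (lift_label_col _ v).
by exists (tight X), X.
Qed.

Lemma pivot_segment I X I' X' k k' z : good I X -> good I' X' ->
  I :\: I' = [set k] -> I' :\: I = [set k'] -> col ord0 X <> col ord0 X' -> inP z ->
  (forall i, i \in I :&: I' -> (A *m z) i 0 = b i 0) -> segment (col ord0 X) (col ord0 X') z.
Proof.
move=> g g' /setD_set1P [kI _ subI] /setD_set1P [k'I' _ subI'] neq zP zJ.
set x := col ord0 X in neq *; set y := col ord0 X' in neq *.
have xI := good_label_col_tight g; have yI' := good_label_col_tight g'.
have yIk i (iIk : i \in I :\ k) : (A *m y) i 0 = b i 0 := yI' i (subsetP subI i iIk).
have xI'k i (iIk : i \in I' :\ k') : (A *m x) i 0 = b i 0 := xI i (subsetP subI' i iIk).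
have zIk i : i \in I :\ k -> (A *m z) i 0 = b i 0.
  by move=> iIk; apply: zJ; rewrite inE (subsetP subI i iIk) andbT; case/setD1P: iIk.
have vanish u : (forall i, i \in I :\ k -> (A *m u) i 0 = b i 0) ->
    forall i, i \in I :\ k -> (A *m (u - x)) i 0 = 0.
  by move=> uI i iIk; rewrite mulmx_entryB uI // xI ?subrr //; case/setD1P: iIk.
have yP := lex_feasible_inP (good_label_feasible g').
have xP := lex_feasible_inP (good_label_feasible g).
have a_gt0 := pivot_gap g kI yP yIk (introN eqP (nesym neq)).
have a'_gt0 := pivot_gap g' k'I' xP xI'k (introN eqP neq).
have [d dk] := pivot_direction g kI.
set a := (A *m (y - x)) k 0 in a_gt0.
pose s := (A *m (z - x)) k 0 / a.
have ws : z - x = s *: (y - x).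
  rewrite (pivot_dir_kernel_cV g kI dk (vanish _ zIk)).
  rewrite (pivot_dir_kernel_cV g kI dk (vanish _ yIk)).
  by rewrite scalerA -/a /s mulfVK // gt_eqF.
have s_ge0 : 0 <= s.
  apply: divr_ge0 (ltW a_gt0); rewrite mulmx_entryB xI //.
  by move: (zP k); rewrite -subr_ge0.
have s_le1 : s <= 1.
  have := zP k'; rewrite -(yI' k' k'I') -/y.
  have -> : z = x + s *: (y - x) by rewrite -ws addrC subrK.
  move: a'_gt0; rewrite -/x -/y !mulmx_entryB mulmx_entryD mulmx_entryZ mulmx_entryB; nra.
by exists s; rewrite s_ge0 s_le1 segmentE -ws addrC subrK.
Qed.

Lemma pivot_edge I X I' X' : good I X -> good I' X' -> #|I :&: I'| = (n - 1)%N ->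
  col ord0 X <> col ord0 X' -> adjacent A b (col ord0 X) (col ord0 X').
Proof.
move=> g g' cap neq.
have n0 : (0 < n)%N.
  case: posnP => // n0; case: neq; apply/colP => i.
  by have := ltn_ord i; rewrite {2}n0.
have [k Dk] := setD_eq1 (good_label_card g) cap n0.
have cap' : #|I' :&: I| = (n - 1)%N by rewrite setIC.
have [k' Dk'] := setD_eq1 (good_label_card g') cap' n0.
have xP := lex_feasible_inP (good_label_feasible g).
have yP := lex_feasible_inP (good_label_feasible g').
have xJ i : i \in I :&: I' -> (A *m col ord0 X) i 0 = b i 0.
  by case/setIP => /(good_label_col_tight g).
have yJ i : i \in I :&: I' -> (A *m col ord0 X') i 0 = b i 0.
  by case/setIP => _ /(good_label_col_tight g').
have face := minimizers_constraint_sum xP xJ.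
split; first exact: good_label_vertex g.
split; first exact: good_label_vertex g'.
split=> //; split.
  by exists (col ord0 X), 0; rewrite lexx ler01 subr0 scale1r scale0r addr0.
exists (constraint_sum A (I :&: I')) => z; split; last first.
  by case/face => zP zJ; apply: (pivot_segment g g' Dk Dk' neq zP zJ).
case=> t [/andP [t0 t1] ->]; apply/face; split=> [i|i iJ]; rewrite mulmx_entryD !mulmx_entryZ.
  by have := xP i; have := yP i; nra.
by rewrite xJ // yJ // -mulrDl subrK mul1r.
Qed.

Lemma vertex_on_ray x y z be : inP x -> is_vertex A b y -> is_vertex A b z -> x <> y ->
  0 < be -> z = x + be *: (y - x) -> z = y.
Proof.
move=> xP vy vz nxy be0 ez; have yP := vertex_inP vy; have zP := vertex_inP vz.
have [lt1|gt1|be1] := ltgtP be 1; last by rewrite ez be1 scale1r addrC subrK.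
  have := vertex_not_interior vz xP yP (r := be); rewrite be0 lt1 segmentE => /(_ isT ez) xz.
  move: ez; rewrite -xz -{1}[x]addr0 => /addrI/esym/eqP.
  by rewrite scaler_eq0 gt_eqF //= subr_eq0 => /eqP yx; case: nxy.
have := vertex_not_interior vy xP zP (r := be^-1); rewrite invr_gt0 be0 invf_lt1 // gt1 segmentE.
have -> : x + be^-1 *: (z - x) = y.
  by rewrite ez addrAC subrr add0r scalerA mulVf ?gt_eqF // scale1r addrC subrK.
by move/(_ isT erefl).
Qed.

Lemma edge_label x y : adjacent A b x y ->
  exists I X k, [/\ good I X, col ord0 X = x, k \in I &
    forall d : 'cV[R]_n, (forall i, i \in I :\ k -> (A *m d) i 0 = 0) ->
      forall i, (A *m x) i 0 = b i 0 -> (A *m y) i 0 = b i 0 -> (A *m d) i 0 = 0].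
Proof.
case=> vx [vy [nxy _]]; have xP := vertex_inP vx; have yP := vertex_inP vy.
pose TE := [set i | ((A *m x) i 0 == b i 0) && ((A *m y) i 0 == b i 0)].
have TE_tight i : i \in TE -> (A *m x) i 0 = b i 0 by rewrite inE => /andP [/eqP].
have TE_dir i : i \in TE -> (A *m (y - x)) i 0 = 0.
  by rewrite inE mulmx_entryB => /andP [/eqP -> /eqP ->]; rewrite subrr.
have notTE_dir i : (A *m x) i 0 = b i 0 -> i \notin TE -> 0 < (A *m (y - x)) i 0.
  move=> xi; rewrite inE xi eqxx /= mulmx_entryB xi => yi.
  by rewrite subr_gt0 lt_def yi (yP i).
have sTE : tight (lift_label m x) \subset TE by rewrite lift_label_tight sub0set.
have [X1 [fX1 cX1 _ sX1 kerX1]] :=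
  tight_saturate TE_tight TE_dir notTE_dir (lift_label_feasible xP) (lift_label_col _ x) sTE.
have [X [gX cX s1]] := vertex_label_extend vx fX1 cX1.
(* Rows of tight X1 only cut out the edge, so leaving any other row of tight X moves
   along the edge. *)
have [sub|/subsetPn [k kX k_X1]] := boolP (tight X \subset tight X1).
  case: nxy; apply/eqP; rewrite eq_sym -subr_eq0; apply/eqP.
  apply: (Asub_inj_cV (good_label_row_full gX)) => i /(subsetP sub) /(subsetP sX1).
  exact: TE_dir.
exists (tight X), X, k; split=> // d hd i xi yi.
apply: (kerX1 d) => [j jX1|]; last by rewrite inE xi yi !eqxx.
by apply: hd; rewrite in_setD1 (subsetP s1 _ jX1) andbT; apply: contraNneq k_X1 => <-.
Qed.

Lemma edge_pivot x y : adjacent A b x y ->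
  exists I X, [/\ good I X, col ord0 X = x & exists2 k, k \in I &
    forall I' X', good I' X' -> k \notin I' -> I :\ k \subset I' -> col ord0 X' = y].
Proof.
move=> xy; have [vx [vy [nxy [_ [c hc]]]]] := xy.
have xP := vertex_inP vx; have yP := vertex_inP vy.
have [I [X [k [g cX kI kerI]]]] := edge_label xy.
exists I, X; split=> //; exists k => // I' X' g' kI' sub.
have [d dk] := pivot_direction g kI.
have eX' := pivot_eq g g' kI sub dk; set t := slack X' k in eX'.
have [al d_al] := edge_direction xP yP hc (kerI d dk.1).
have al_gt0 : 0 < al.
  have := dk.2; rewrite d_al mulmx_entryZ mulmx_entryB -cX (good_label_col_tight g kI).
  by have := yP k; nra.
have t_pos : lex_pos t := good_label_slack_pos g' kI'.
pose be := t 0 0 * al.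
have eY : col ord0 X' = x + be *: (y - x) by rewrite eX' col_update cX d_al scalerA.
have be_gt0 : 0 < be.
  rewrite pmulr_lgt0 // lt_def lex_nneg_head ?andbT; last by right.
  apply/eqP => t0; have cX' : col ord0 X' = x by rewrite eY /be t0 mul0r scale0r addr0.
  have [l lI' lI] : exists2 l, l \in I' & l \notin I.
    apply/subsetPn; apply: contra kI' => sI'; by rewrite (good_label_subset g' g sI').
  have dl : (A *m d) l 0 < 0.
    move: (good_label_slack0 g' lI'); rewrite eX' slack_update.
    exact: lex_pos_cancel (good_label_slack_pos g lI) (or_intror t_pos).
  have xl : (A *m x) l 0 = b l 0.
    by rewrite -cX'; apply: slack_head0; apply: good_label_slack0 g' lI'.
  move: dl; rewrite d_al mulmx_entryZ mulmx_entryB xl.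
  by have := yP l; nra.
exact: vertex_on_ray xP vy (good_label_vertex g') nxy be_gt0 eY.
Qed.

End VerticesAndEdges.

Theorem mainTheorem7 (R : realType) (m n : nat)
  (A : 'M[R]_(m, n)) (b : 'cV[R]_m)
  (V : finType) (e : rel V) (lab : V -> {set 'I_m} * 'M[R]_(n, m.+1)) :
  bounded_P A b ->
  injective lab ->
  symmetric e ->
  (exists u : V, True) ->
  (forall u : V, good_label A b (lab u).1 (lab u).2) ->
  (forall u : V, #|[set u' | e u u']| = n) ->
  (forall u u' : V, e u u' -> #|(lab u).1 :&: (lab u').1| = (n - 1)%N) ->
  (forall x : 'cV[R]_n, is_vertex A b x <-> exists u : V, col ord0 (lab u).2 = x) /\
  (forall x y : 'cV[R]_n, adjacent A b x y <->
     exists u u' : V, [/\ e u u', col ord0 (lab u).2 = x, col ord0 (lab u').2 = y & x <> y]).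
Proof.
move=> _ lab_inj _ V_nonempty lab_good deg_n adj_cap.
have lab_onto I X : good_label A b I X -> exists u, lab u = (I, X).
  exact: graph_complete lab_inj lab_good deg_n adj_cap I X V_nonempty.
split=> [x|x y].
  split=> [/vertex_good_label [I [X [g <-]]]|[u <-]]; last exact: good_label_vertex (lab_good u).
  by have [u lu] := lab_onto I X g; exists u; rewrite lu.
split=> [xy|[u [u' [euu' <- <- nxy]]]]; last first.
  exact: pivot_edge (lab_good u) (lab_good u') (adj_cap _ _ euu') nxy.
have [_ [_ [nxy _]]] := xy.
have [I [X [g cX [k kI pivot_y]]]] := edge_pivot xy.
have [u lu] := lab_onto I X g.
have kIu : k \in (lab u).1 by rewrite lu.
have [u' [euu' ku' sub']] := neighbour_pivot lab_inj lab_good deg_n adj_cap kIu.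
exists u, u'; split=> //; first by rewrite lu.
by apply: pivot_y (lab_good u') ku' _; rewrite lu in sub'.
Qed.
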